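(* Let $G=(V_1,\ldots,V_p,E)$ be a finite $p$-partite graph viewed as a network in which each vertex is a node that can send messages to its neighbors, and let $k_1,\ldots,k_p$ be nonnegative integers. If every node runs the distributed peeling protocol described in the context with threshold $k(v)=k_i$ for $v\in V_i$, then once no messages remain in transit, the subgraph of $G$ induced by the nodes that are still active equals $G(k_1,\ldots,k_p)$.
   Context: A $p$-partite graph $G=(V_1,\ldots,V_p,E)$ has vertex set partitioned into disjoint sets $V_1,\ldots,V_p$ with no edges inside any $V_i$. $G(k_1,\ldots,k_p)$ denotes the largest subgraph of $G$ in which every vertex of $V_i$ has degree at least $k_i$ for every $i$ (unique, possibly empty). Distributed peeling protocol with thresholds $k(v)$: each node $v$ keeps a counter $degree$, initialized to $\deg_G(v)$, and a status, initially active. Initially, if $degree<k(v)$, node $v$ sends an ''off'' message to each of its neighbors and becomes inactive. An active node, upon receiving a message, sets $degree=degree-1$; if then $degree<k(v)$, it sends an ''off'' message to each of its neighbors and becomes inactive. An inactive node remains inactive and ignores all incoming messages. *)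

From mathcomp Require Import all_boot.
Set Implicit Arguments. Unset Strict Implicit. Unset Printing Implicit Defensive.

Section Peeling.
Variables (T : finType) (e : rel T) (p : nat) (part : T -> 'I_p) (k : 'I_p -> nat).

Definition nbrs (v : T) : {set T} := [set w | e v w].
Definition degG (v : T) : nat := #|nbrs v|.
Definition thr (v : T) : nat := k (part v).

Definition good (S : {set T}) : bool :=
  [forall v in S, thr v <= #|[set w in S | e v w]|].

(* Vertex set of G(k_1,...,k_p): union of all good sets (itself good, hence the largest) *)
Definition coreV : {set T} := \bigcup_(S | good S) S.

Definition induced (S : {set T}) : {set T} * {set T * T} :=
  (S, [set uv | (uv.1 \in S) && (uv.2 \in S) && e uv.1 uv.2]).

(* G(k_1,...,k_p) as a subgraph of G (the largest such subgraph is induced) *)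
Definition Gk : {set T} * {set T * T} := induced coreV.

(* a message (u, w) is an "off" message sent by u to w, currently in transit *)
Record state := State {
  active : T -> bool;
  degree : T -> nat;
  transit : seq (T * T) }.

Definition off_msgs (v : T) : seq (T * T) := [seq (v, w) | w <- enum (nbrs v)].

Definition init_state : state :=
  State (fun v => ~~ (degG v < thr v)) degG
        (flatten [seq off_msgs v | v <- enum T & degG v < thr v]).

Definition deliver (s : state) (m : T * T) : state :=
  let w := m.2 in
  let rest := rem m (transit s) in
  if active s w then
    let d := (degree s w).-1 in
    let deg' := fun x => if x == w then d else degree s x in
    if d < thr w then
      State (fun x => if x == w then false else active s x) deg'
            (rest ++ off_msgs w)
    else State (active s) deg' rest
  else State (active s) (degree s) rest.

Inductive step : state -> state -> Prop :=
| step_deliver s m : m \in transit s -> step s (deliver s m).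

Inductive reachable : state -> Prop :=
| reach_init : reachable init_state
| reach_step s s' : reachable s -> step s s' -> reachable s'.

Definition active_set (s : state) : {set T} := [set v | active s v].

End Peeling.

From mathcomp Require Import all_boot.
Set Implicit Arguments. Unset Strict Implicit. Unset Printing Implicit Defensive.

(** Every reachable state satisfies an invariant: each message in transit
    goes along an edge from an inactive sender, no message is duplicated, an
    active node's counter equals the number of its neighbours that are still
    active or whose "off" message to it has not arrived yet, active nodes are
    above their threshold, and every vertex of the core [G(k_1,...,k_p)] is
    active.  The last part holds because a core vertex only loses neighbours
    outside the core, so its counter never drops below its threshold.  Once
    nothing is in transit, the counter of an active node is its degree in the
    subgraph induced by the active nodes, so the active set is good, hence
    contained in the core, which it contains by the invariant. *)

Section Peeling.
Variables (T : finType) (e : rel T) (p : nat) (part : T -> 'I_p) (k : 'I_p -> nat).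
Hypothesis e_sym : symmetric e.

Local Notation thr := (thr part k).
Local Notation coreV := (coreV e part k).
Local Notation off_msgs := (off_msgs e).
Local Notation deliver := (deliver e part k).

Lemma coreV_thr v : v \in coreV -> thr v <= #|[set w in coreV | e v w]|.
Proof.
case/bigcupP=> S goodS vS; move/forallP/(_ v): (goodS); rewrite vS => /leq_trans.
apply; apply/subset_leq_card/subsetP=> w; rewrite !inE => /andP[wS ->].
by rewrite andbT; apply/bigcupP; exists S.
Qed.

Lemma mem_off_msgs v m : (m \in off_msgs v) = (m.1 == v) && e v m.2.
Proof.
case: m => a b; apply/mapP/andP => [[w] | [/= /eqP -> evb]].
  by rewrite mem_enum inE => evw [-> ->].
by exists b; rewrite ?mem_enum ?inE.
Qed.

Lemma uniq_off_msgs v : uniq (off_msgs v).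
Proof. by rewrite map_inj_uniq ?enum_uniq // => a b []. Qed.

Lemma mem_flatten_off_msgs (vs : seq T) a b :
  ((a, b) \in flatten [seq off_msgs v | v <- vs]) = (a \in vs) && e a b.
Proof.
elim: vs => [|v vs IH] //=; rewrite mem_cat IH mem_off_msgs in_cons /=.
by rewrite andb_orl; case: eqP => [-> | _].
Qed.

Lemma uniq_flatten_off_msgs (vs : seq T) :
  uniq vs -> uniq (flatten [seq off_msgs v | v <- vs]).
Proof.
elim: vs => [|v vs IH] //= /andP[vNvs /IH uniq_vs].
rewrite cat_uniq uniq_off_msgs uniq_vs andbT /=.
apply/hasPn => -[a b]; rewrite mem_flatten_off_msgs mem_off_msgs /=.
by case/andP=> avs _; apply: contraNN vNvs => /andP[/eqP <- _].
Qed.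

(* [u] is live for [v] while [v] has not yet learnt that [u] is off. *)
Definition live (s : state T) (u v : T) : bool :=
  active s u || ((u, v) \in transit s).

Definition live_nbrs (s : state T) (v : T) : {set T} :=
  [set u | e v u && live s u v].

Lemma eq_card_live_nbrs s s' v :
  (forall u, e v u -> live s' u v = live s u v) ->
  #|live_nbrs s' v| = #|live_nbrs s v|.
Proof.
by move=> eq_live; apply: eq_card => u; rewrite !inE; case: (boolP (e v u)) => // /eq_live.
Qed.

Record peel_inv (s : state T) : Prop := PeelInv {
  inv_uniq : uniq (transit s);
  inv_transit : forall m, m \in transit s -> e m.1 m.2 && ~~ active s m.1;
  inv_thr : forall v, active s v -> thr v <= degree s v;
  inv_degree : forall v, active s v -> degree s v = #|live_nbrs s v|;
  inv_core : forall v, v \in coreV -> active s v }.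

Lemma peel_inv_init : peel_inv (init_state e part k).
Proof.
have mem_init a b : ((a, b) \in transit (init_state e part k)) =
                    (degG e a < thr a) && e a b.
  by rewrite mem_flatten_off_msgs mem_filter mem_enum andbT.
split=> /=.
- by rewrite uniq_flatten_off_msgs // filter_uniq // enum_uniq.
- by move=> [a b]; rewrite mem_init /= => /andP[-> ->].
- by move=> v; rewrite -leqNgt.
- move=> v _; apply: eq_card => u; rewrite !inE /live mem_init /= (e_sym u v).
  by case: (e v u); rewrite ?andbT ?orNb.
- move=> v /coreV_thr; rewrite -leqNgt => /leq_trans; apply.
  by apply/subset_leq_card/subsetP => w; rewrite !inE => /andP[_ ->].
Qed.

Section Delivery.
Variables (s : state T) (x w : T).
Hypotheses (inv_s : peel_inv s) (xw_transit : (x, w) \in transit s).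

Let exw : e x w. Proof. by case/andP: (inv_transit inv_s xw_transit). Qed.
Let x_off : ~~ active s x. Proof. by case/andP: (inv_transit inv_s xw_transit). Qed.

Let mem_rest m : (m \in rem (x, w) (transit s)) = (m != (x, w)) && (m \in transit s).
Proof. by rewrite (mem_rem_uniq _ (inv_uniq inv_s)) inE. Qed.

Let mem_rest_other u v : v != w ->
  ((u, v) \in rem (x, w) (transit s)) = ((u, v) \in transit s).
Proof. by move=> vNw; rewrite mem_rest; case: eqP => // -[_ /eqP]; rewrite (negbTE vNw). Qed.

Lemma live_nbrs_received (d : T -> nat) :
  live_nbrs (State (active s) d (rem (x, w) (transit s))) w = live_nbrs s w :\ x.
Proof.
apply/setP => u; rewrite !inE /live /= mem_rest.
case: (u =P x) => [-> | /eqP uNx]; first by rewrite (negbTE x_off) eqxx andbF.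
by have -> : (u, w) != (x, w) by apply: contraNneq uNx => -[->].
Qed.

Lemma degree_received : active s w -> (degree s w).-1 = #|live_nbrs s w :\ x|.
Proof.
move=> w_on; rewrite (inv_degree inv_s w_on) (cardsD1 x) inE e_sym exw /live.
by rewrite xw_transit orbT.
Qed.

(* A core vertex keeps all its core neighbours, and the sender [x] is off. *)
Lemma core_received : w \in coreV -> thr w <= #|live_nbrs s w :\ x|.
Proof.
move=> /coreV_thr /leq_trans; apply; apply/subset_leq_card/subsetP => u.
rewrite !inE /live => /andP[/(inv_core inv_s) u_on ->]; rewrite u_on /= andbT.
by apply: contraNneq x_off => <-.
Qed.

Lemma peel_inv_deliver_inactive : ~~ active s w -> peel_inv (deliver s (x, w)).
Proof.
rewrite /deliver /= => /negbTE w_off; rewrite w_off.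
split=> /=; try exact: (inv_thr inv_s); try exact: (inv_core inv_s).
- exact/rem_uniq/(inv_uniq inv_s).
- by move=> m; rewrite mem_rest => /andP[_ /(inv_transit inv_s)].
- move=> v v_on; rewrite (inv_degree inv_s v_on); apply: eq_card_live_nbrs => u _.
  by rewrite /live /= mem_rest_other //; apply: contraTneq v_on => ->; rewrite w_off.
Qed.

Lemma peel_inv_deliver_survives :
  active s w -> thr w <= (degree s w).-1 -> peel_inv (deliver s (x, w)).
Proof.
move=> w_on w_thr; rewrite /deliver /= w_on ltnNge w_thr /=.
split=> /=; try exact: (inv_core inv_s).
- exact/rem_uniq/(inv_uniq inv_s).
- by move=> m; rewrite mem_rest => /andP[_ /(inv_transit inv_s)].
- by move=> v v_on; case: eqP => [-> // | _]; apply: (inv_thr inv_s).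
- move=> v v_on; case: eqP => [-> | /eqP vNw].
    by rewrite degree_received // live_nbrs_received.
  rewrite (inv_degree inv_s v_on); apply: eq_card_live_nbrs => u _.
  by rewrite /live /= mem_rest_other.
Qed.

Lemma peel_inv_deliver_turns_off :
  active s w -> (degree s w).-1 < thr w -> peel_inv (deliver s (x, w)).
Proof.
move=> w_on w_low; rewrite /deliver /= w_on w_low.
have transit_off m : m \in transit s -> m.1 != w.
  by move/(inv_transit inv_s)/andP=> [_]; apply: contraNneq => ->.
split=> /=.
- rewrite cat_uniq rem_uniq ?uniq_off_msgs ?(inv_uniq inv_s) //= andbT.
  apply/hasPn => m; rewrite mem_off_msgs mem_rest => /andP[/eqP m_w _].
  by apply/negP => /andP[_ /transit_off]; rewrite m_w eqxx.
- move=> m; rewrite mem_cat mem_rest mem_off_msgs.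
  case/orP=> [/andP[_ mt] | /andP[/eqP -> ->]]; last by rewrite eqxx.
  by rewrite (negbTE (transit_off _ mt)); apply: (inv_transit inv_s).
- by move=> v; case: eqP => // _; apply: (inv_thr inv_s).
- move=> v; case: eqP => // /eqP vNw v_on; rewrite (inv_degree inv_s v_on).
  apply: eq_card_live_nbrs => u evu; rewrite /live /= mem_cat mem_off_msgs /=.
  rewrite mem_rest_other //; case: eqP evu => [-> evw | _ _]; last by rewrite orbF.
  by rewrite w_on /= e_sym evw orbT.
- move=> v; case: eqP => [-> w_core | _]; last exact: (inv_core inv_s).
  by move: w_low; rewrite degree_received // ltnNge core_received.
Qed.

Lemma peel_inv_deliver : peel_inv (deliver s (x, w)).
Proof.
have [w_on | w_off] := boolP (active s w); last exact: peel_inv_deliver_inactive.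
have [w_thr | w_low] := leqP (thr w) (degree s w).-1.
  exact: peel_inv_deliver_survives.
exact: peel_inv_deliver_turns_off.
Qed.

End Delivery.

Lemma peel_inv_reachable s : reachable e part k s -> peel_inv s.
Proof.
elim=> [|s0 s1 _ inv_s0 step_s01]; first exact: peel_inv_init.
by case: step_s01 inv_s0 => {}s0 [x w] xw_transit inv_s0; apply: peel_inv_deliver.
Qed.

Lemma active_set_quiescent s :
  reachable e part k s -> transit s = [::] -> active_set s = coreV.
Proof.
move=> /peel_inv_reachable inv_s no_transit.
apply/setP => v; rewrite inE; apply/idP/idP => [v_on | /(inv_core inv_s) //].
apply/bigcupP; exists (active_set s); last by rewrite inE.
apply/forallP => u; apply/implyP; rewrite inE => u_on.
rewrite (leq_trans (inv_thr inv_s u_on)) // (inv_degree inv_s u_on).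
apply/subset_leq_card/subsetP => w; rewrite !inE /live no_transit in_nil orbF.
by case/andP=> -> ->.
Qed.

End Peeling.

Theorem corollary4 (T : finType) (e : rel T) (p : nat) (part : T -> 'I_p)
    (k : 'I_p -> nat) :
  symmetric e -> irreflexive e ->
  (forall u v, e u v -> part u != part v) ->
  forall s : state T,
    reachable e part k s -> transit s = [::] ->
    induced e (active_set s) = Gk e part k.
Proof.
move=> e_sym _ _ s reach_s quiet_s.
by rewrite /Gk (active_set_quiescent e_sym reach_s quiet_s).
Qed.
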